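(* Let $n\ge 2$ and $k\ge1$. Let $M$ be the $(k+1)\times(k+1)$ upper triangular matrix with $M(i,i)=k+1$ for all $i$, $M(i,j)=i$ for $i<j$, and $M(i,j)=0$ for $i>j$; let $I$ be the identity matrix of dimension $k+1$ and $N:=M-(k+1)I$. Then for any $l\in[k]$ and $i\in[k+1]$ with $i+l\le k+1$, $$N^{l}(i,i+l)=\frac{(i+l-1)!}{(i-1)!}.$$
   Context: For a matrix $A$, $A(i,j)$ denotes the entry in row $i$ and column $j$; $[k]=\{1,\dots,k\}$. *)

From mathcomp Require Import all_boot all_order all_algebra.
Set Implicit Arguments. Unset Strict Implicit. Unset Printing Implicit Defensive.
Import GRing.Theory Num.Theory.
Local Open Scope ring_scope.

(* Indices are 0-based
   ordinals: the paper's row i (1-based) is the ordinal i-1, so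
   M(i,j) = i (1-based) for i<j becomes (i'+1) for ordinals i' < j'. *)
Definition Mmat (k : nat) : 'M[int]_(k.+1) :=
  \matrix_(i < k.+1, j < k.+1)
    (if (i == j) then (k.+1)%:R
     else if (i < j)%N then (i.+1)%:R else 0).

Definition Nmat (k : nat) : 'M[int]_(k.+1) := Mmat k - (k.+1)%:R%:M.

From mathcomp Require Import all_boot all_order all_algebra.
From mathcomp Require Import zify.
Import GRing.Theory Num.Theory.
Local Open Scope ring_scope.

(* N is strictly upper triangular, so (N^l)(i, j) is a sum over index paths
   i < c_1 < ... < c_(l-1) < j; it vanishes for j < i + l, and for j = i + l the
   only path is along the superdiagonal, whose entries N(c, c+1) = c (1-based)
   multiply to i (i+1) ... (i+l-1) = (i+l-1)!/(i-1)!. *)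

Section StrictlyUpperTriangularPowers.

Variables (R : pzRingType) (n : nat) (A : 'M[R]_n.+1).
Hypothesis A_strict_upper : forall i j : 'I_n.+1, (j <= i)%N -> A i j = 0.

Lemma strict_upper_expr_lt (l : nat) (i j : 'I_n.+1) : (j < i + l)%N -> (A ^+ l) i j = 0.
Proof.
elim: l j => [|l IHl] j lt_j_il.
  by rewrite expr0 mxE; case: eqVneq => // eq_ij; rewrite eq_ij addn0 ltnn in lt_j_il.
rewrite exprSr mxE; apply: big1 => c _.
have [le_jc | lt_cj] := leqP j c; first by rewrite A_strict_upper ?mulr0.
by rewrite IHl ?mul0r //; lia.
Qed.

Lemma strict_upper_expr_diag (l : nat) (i j : 'I_n.+1) : j = (i + l)%N :> nat ->
  (A ^+ l) i j = \prod_(i <= m < i + l) A (inord m) (inord m.+1).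
Proof.
elim: l j => [|l IHl] j j_eq.
  have -> : j = i by apply: val_inj; rewrite /= j_eq addn0.
  by rewrite expr0 addn0 big_geq // mxE eqxx.
have lt_il : (i + l < n.+1)%N by have := ltn_ord j; lia.
pose c := Ordinal lt_il.
rewrite exprSr mxE (bigD1 c) //= big1 => [|d ne_dc]; last first.
  have [le_jd | lt_dj] := leqP j d; first by rewrite A_strict_upper ?mulr0.
  have ne_d : (d : nat) != (i + l)%N by apply: contraNneq ne_dc => eq_d; apply/eqP/val_inj.
  by rewrite strict_upper_expr_lt ?mul0r //; move: ne_d; lia.
rewrite addr0 IHl // addnS big_nat_recr ?leq_addr //=.
by congr (_ * A _ _); apply: val_inj; rewrite /= inordK ?j_eq ?addnS //; have := ltn_ord j; lia.
Qed.

End StrictlyUpperTriangularPowers.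

Lemma prod_succ_ffact a l : (\prod_(a <= m < a + l) m.+1)%N = (a + l) ^_ l.
Proof.
elim: l => [|l IHl]; first by rewrite addn0 big_geq.
by rewrite addnS big_nat_recr ?leq_addr //= IHl ffactSS mulnC.
Qed.

Lemma NmatE k (i j : 'I_k.+1) : Nmat k i j = if (i < j)%N then (i.+1)%:R else 0.
Proof.
rewrite /Nmat /Mmat !mxE; case: eqVneq => [->|ne_ij].
  by rewrite ltnn mulr1n subrr.
by rewrite mulr0n subr0.
Qed.

Lemma Nmat_strict_upper k (i j : 'I_k.+1) : (j <= i)%N -> Nmat k i j = 0.
Proof. by rewrite NmatE ltnNge => ->. Qed.

Lemma Nmat_expr_diag k l (i j : 'I_k.+1) : j = (i + l)%N :> nat ->
  (Nmat k ^+ l) i j = ((i + l) ^_ l)%N%:R.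
Proof.
move=> j_eq; rewrite strict_upper_expr_diag //; last exact: Nmat_strict_upper.
rewrite -prod_succ_ffact natr_prod; apply: eq_big_nat => m /andP[_ lt_m].
have lt_mk : (m.+1 < k.+1)%N by have := ltn_ord j; lia.
by rewrite NmatE !inordK ?ltnSn //; exact: ltnW.
Qed.

Theorem lemma3p8 (n k : nat) (hn : (2 <= n)%N) (hk : (1 <= k)%N)
  (l i : nat) (hl1 : (1 <= l)%N) (hlk : (l <= k)%N) (hi1 : (1 <= i)%N)
  (hik : (i + l <= k.+1)%N) :
  (Nmat k ^+ l) (inord i.-1) (inord (i + l).-1)
    = (((i + l).-1)`! %/ (i.-1)`!)%N%:R.
Proof.
have shift : (i + l).-1 = (i.-1 + l)%N by lia.
rewrite Nmat_expr_diag !inordK ?shift ?ffact_factd ?addnK ?leq_addl //; lia.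
Qed.
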